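(* Let $r,a,b$ be positive integers with $\gcd(r,a)=\gcd(r,b)=1$. Then the isolated cyclic quotient singularity $\frac{1}{r}(a,b)$ is a T-singularity if and only if $r\mid(a+b)^2$.
   Context: $\frac{1}{r}(a,b)$ denotes the cyclic quotient singularity $\mathbb{C}^2/\mu_r$ with $\zeta\cdot(x,y)=(\zeta^ax,\zeta^by)$; two such are isomorphic in particular when one is obtained from the other by multiplying $(a,b)$ by an integer coprime to $r$ or swapping $a$ and $b$. A T-singularity is a quotient surface singularity admitting a $\mathbb{Q}$-Gorenstein one-parameter smoothing; by Kollár–Shepherd-Barron, the cyclic quotient T-singularities are exactly those isomorphic to $\frac{1}{nd^2}(1,dna-1)$ for positive integers $n,d,a$ with $\gcd(d,a)=1$. *)

From mathcomp Require Import all_boot.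
Set Implicit Arguments. Unset Strict Implicit. Unset Printing Implicit Defensive.

(* Isomorphism of (isolated) cyclic quotient singularities 1/r(a,b) and
   1/r(a',b'): there is an integer u coprime to r with
   (a',b') = u(a,b) or (a',b') = u(b,a) modulo r. *)
Definition cqs_iso (r a b a' b' : nat) : Prop :=
  exists u : nat, coprime u r /\
    ((a' = u * a %[mod r] /\ b' = u * b %[mod r]) \/
     (a' = u * b %[mod r] /\ b' = u * a %[mod r])).

Definition is_T_singularity (r a b : nat) : Prop :=
  exists n d c : nat, [/\ 0 < n, 0 < d, 0 < c, coprime d c &
    r = n * d ^ 2 /\ cqs_iso r 1 (d * n * c - 1) a b].

From mathcomp Require Import all_boot zify.

Set Implicit Arguments.
Unset Strict Implicit.
Unset Printing Implicit Defensive.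

(* Forward: an isomorphism 1/r(a,b) ~ 1/r(1, dnc - 1) means (a,b) is u(1, dnc-1)
   up to order, so a + b = u * dnc (mod r); as (dnc)^2 = (n d^2) n c^2 is a
   multiple of r = n d^2, also r | (a+b)^2.

   Backward: let a' be an inverse of a mod r and t = (a+b) a'.  Then r | t^2,
   and writing m = gcd(t, r), r = d m, t = s m, the fact r | m^2 forces
   m = d n with r = n d^2 and gcd(d, s) = 1.  With c = s + d we get
   dnc = t + r, and u = a maps (1, dnc - 1) to (a, a(t + r - 1)) = (a, b)
   modulo r, because a t = a + b (mod r). *)

Lemma cqs_iso_sum r a b K :
  0 < K -> cqs_iso r 1 (K - 1) a b -> exists u, a + b = u * K %[mod r].
Proof.
move=> K0 [u [_ hab]]; exists u.
have sumK : u * 1 + u * (K - 1) = u * K by rewrite -mulnDr subnKC.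
case: hab => [[ha hb] | [ha hb]]; rewrite -modnDm ha hb modnDm -sumK //.
by rewrite addnC.
Qed.

Lemma dvdn_sq_T_index r n d c u x :
  r = n * d ^ 2 -> x = u * (d * n * c) %[mod r] -> r %| x ^ 2.
Proof.
move=> hr hx; rewrite /dvdn -modnXm hx modnXm -/(dvdn _ _) hr.
by apply/dvdnP; exists (u ^ 2 * n * c ^ 2); rewrite !expnMn; nia.
Qed.

Lemma modn_inverse a r : 0 < a -> coprime a r -> exists a', a * a' = 1 %[mod r].
Proof.
move=> a0 car; case: (egcdnP r a0) => ka kr hk _.
by exists ka; rewrite mulnC hk (eqP car) modnMDl.
Qed.

(* If r divides t^2 then r divides gcd(t, r)^2 = gcd(t^2, t r, r t, r^2). *)
Lemma dvdn_gcd_sq t r : r %| t ^ 2 -> r %| gcdn t r ^ 2.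
Proof.
rewrite -!mulnn => rt2.
rewrite muln_gcdl !muln_gcdr !dvdn_gcd rt2.
by rewrite dvdn_mull ?dvdn_mulr.
Qed.

(* Square-root decomposition: whenever r | t^2, we can write r = n d^2 and
   t + r = d n (s + d) with gcd(d, s) = 1; here d n = gcd(t, r) and t = s d n. *)
Lemma T_index_decomposition r t : 0 < r -> r %| t ^ 2 ->
  exists n d s,
    [/\ 0 < n, 0 < d, coprime d s, r = n * d ^ 2 & d * n * (s + d) = t + r].
Proof.
move=> r0 rt2; set m := gcdn t r.
have m0 : 0 < m by rewrite gcdn_gt0 r0 orbT.
set d := r %/ m; set s := t %/ m.
have hr : r = d * m by rewrite divnK // dvdn_gcdr.
have ht : t = s * m by rewrite divnK // dvdn_gcdl.
have [n hn] := dvdnP (dvdn_gcd_sq rt2); rewrite -/m in hn.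
have hm : m = d * n.
  by apply/eqP; rewrite -(eqn_pmul2r m0) mulnn hn hr mulnCA mulnA.
have /andP [d0 n0] : (0 < d) && (0 < n) by rewrite -muln_gt0 -hm.
have cds : coprime d s.
  by rewrite /coprime -(eqn_pmul2r m0) mul1n gcdnC muln_gcdl -ht -hr.
exists n, d, s; split => //; first by rewrite hr hm; nia.
by rewrite -hm mulnDr mulnC -ht [m * d]mulnC -hr.
Qed.

Lemma mul_pred_cong r a b a' K :
  a * a' = 1 %[mod r] -> 0 < K -> K = (a + b) * a' %[mod r] ->
  a * (K - 1) = b %[mod r].
Proof.
move=> inv K0 hK; apply/eqP; rewrite -(eqn_modDr a) -{2}(muln1 a) -mulnDr.
rewrite subnK // -modnMmr hK modnMmr mulnCA -modnMmr inv modnMmr muln1.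
by rewrite addnC.
Qed.

Theorem lemma3p6 (r a b : nat) :
  0 < r -> 0 < a -> 0 < b -> coprime r a -> coprime r b ->
  (is_T_singularity r a b <-> r %| (a + b) ^ 2).
Proof.
move=> r0 a0 _ cra _; split.
  case=> n [d [c [n0 d0 c0 _ [hr iso]]]].
  have [|u hu] := cqs_iso_sum _ iso; first by rewrite !muln_gt0 n0 d0 c0.
  exact: dvdn_sq_T_index hr hu.
move=> hdiv.
have [a' inv] : exists a', a * a' = 1 %[mod r].
  by apply: modn_inverse a0 _; rewrite coprime_sym.
have rt2 : r %| ((a + b) * a') ^ 2 by rewrite expnMn dvdn_mulr.
have [n [d [s [n0 d0 cds hr hK]]]] := T_index_decomposition r0 rt2.
exists n, d, (s + d); split => //; first by rewrite addn_gt0 d0 orbT.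
  by rewrite -coprime_modr modnDr coprime_modr.
split => //; exists a; split; first by rewrite coprime_sym.
left; split; first by rewrite muln1.
apply/esym; apply: mul_pred_cong inv _ _.
  by rewrite hK addn_gt0 r0 orbT.
by rewrite hK modnDr.
Qed.
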